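(* For the hypergeometric weights described in the context, the step-line recursion coefficients satisfy \begin{align*} \alpha&=(\vartheta H)H^{-1}=\mathfrak a_{+}S^{[1]}-S^{[1]},\\ \beta&=-\vartheta S^{[1]}=\mathfrak a_{+}S^{[2]}-S^{[2]}-S^{[1]}\mathfrak a_{-}\big((\vartheta H)H^{-1}\big),\\ \gamma&=-\vartheta S^{[2]}+(\vartheta\mathfrak a_{-}S^{[1]})S^{[1]}=H^{-1}\mathfrak a^2_{-}H. \end{align*}
   Context: Weights on $\mathbb N_0$: $w^{(a)}(k)=\frac{(b^{(a)}_1)_k\cdots(b^{(a)}_{M^{(a)}})_k}{(c_1)_k\cdots(c_N)_k}\frac{(\eta^{(a)})^k}{k!}$, $a\in\{1,2\}$, convergent series. Moment matrix (indices from 0): $\mathscr M_{n,2m}=\sum_k k^{n+m}w^{(1)}(k)$, $\mathscr M_{n,2m+1}=\sum_k k^{n+m}w^{(2)}(k)$, with all leading principal minors nonzero, so $\mathscr M=S^{-1}H\tilde S^{-\top}$ ($S,\tilde S$ lower unitriangular, $H$ diagonal), depending on $(\eta^{(1)},\eta^{(2)})$. $\Lambda$ has ones on the first superdiagonal; $S=I+\Lambda^\top S^{[1]}+(\Lambda^\top)^2S^{[2]}+\cdots$ with diagonal $S^{[k]}$; $S\Lambda S^{-1}=(\Lambda^\top)^2\gamma+\Lambda^\top\beta+\alpha+\Lambda$ with diagonal $\alpha,\beta,\gamma$. $\mathfrak a_-\operatorname{diag}(m_0,m_1,\dots)=\operatorname{diag}(m_1,m_2,\dots)$, $\mathfrak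 a_+\operatorname{diag}(m_0,m_1,\dots)=\operatorname{diag}(0,m_0,m_1,\dots)$. $\vartheta=\eta^{(1)}\partial/\partial\eta^{(1)}+\eta^{(2)}\partial/\partial\eta^{(2)}$. *)

From Stdlib Require Import Reals.
From Coquelicot Require Import Coquelicot.

Set Implicit Arguments.
Unset Strict Implicit.
Unset Printing Implicit Defensive.

(** Semi-infinite matrices (rows/columns indexed from 0) and diagonal
    matrices (identified with the sequence of their diagonal entries). *)
Definition smat := nat -> nat -> R.
Definition sdiag := nat -> R.

Definition poch (x : R) (k : nat) : R :=
  List.fold_right Rmult 1%R (List.map (fun i => (x + INR i)%R) (List.seq 0 k)).

Definition hweight (bs cs : list R) (eta : R) (k : nat) : R :=
  (List.fold_right Rmult 1%R (List.map (fun b => poch b k) bs)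
   / List.fold_right Rmult 1%R (List.map (fun c => poch c k) cs)
   * (eta ^ k) / INR (Stdlib.Arith.Factorial.fact k))%R.

Definition moment (w1 w2 : nat -> R) : smat :=
  fun n j => if Nat.even j
             then Series (fun k => (INR k ^ (n + Nat.div2 j) * w1 k)%R)
             else Series (fun k => (INR k ^ (n + Nat.div2 j) * w2 k)%R).

Definition Lam : smat := fun i j => if Nat.eqb j (S i) then 1%R else 0%R.

Definition am (d : sdiag) : sdiag := fun i => d (S i).
Definition ap (d : sdiag) : sdiag := fun i => match i with 0 => 0%R | S i' => d i' end.

(** Subdiagonals: S = I + Lam^T S^[1] + (Lam^T)^2 S^[2] + ..., i.e. S^[k]_i = S_{i+k,i}. *)
Definition subdiag (k : nat) (A : smat) : sdiag := fun i => A (i + k)%nat i.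

Definition theta (f : R -> R -> R) (e1 e2 : R) : R :=
  (e1 * Derive (fun x => f x e2) e1 + e2 * Derive (fun y => f e1 y) e2)%R.

Definition lower_unitri (A : smat) : Prop :=
  (forall i, A i i = 1%R) /\ (forall i j, (i < j)%nat -> A i j = 0%R).


Definition thetaD (D : R -> R -> sdiag) (e1 e2 : R) : sdiag :=
  fun i => theta (fun x y => D x y i) e1 e2.

(** Gauss-Borel factorization M = S^{-1} H St^{-T} with S, St lower unitriangular and
    H diagonal, written in the equivalent (all products are finite sums) form
    S M St^T = H :  sum_{k<=i} sum_{l<=j} S_{ik} M_{kl} St_{jl} = delta_{ij} H_i. *)
Definition gauss_borel (M Sm St : smat) (H : sdiag) : Prop :=
  lower_unitri Sm /\ lower_unitri St /\
  forall i j,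
    sum_f_R0 (fun k => sum_f_R0 (fun l => (Sm i k * M k l * St j l)%R) j) i
    = (if Nat.eqb i j then H i else 0%R).

Definition jacobi4 (ga be al : sdiag) : smat :=
  fun i j => ((if Nat.eqb i (j + 2) then ga j else 0)
            + (if Nat.eqb i (j + 1) then be j else 0)
            + (if Nat.eqb i j then al j else 0)
            + Lam i j)%R.

(** S Lam S^{-1} = J, written as S Lam = J S (S lower unitriangular, J lower
    Hessenberg, so both products are finite sums). *)
Definition step_line (Sm : smat) (ga be al : sdiag) : Prop :=
  forall i j,
    sum_f_R0 (fun k => (Sm i k * Lam k j)%R) i
    = sum_f_R0 (fun k => (jacobi4 ga be al i k * Sm k j)%R) (S i).

From mathcomp Require Import ssreflect ssrfun ssrbool eqtype ssrnat seq fintype bigop ssralg matrix.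
From mathcomp Require Import Rstruct.

Definition lead_minor (A : smat) (n : nat) : R :=
  (\det (\matrix_(i < n, j < n) A (nat_of_ord i) (nat_of_ord j)))%R.

(* The Euler operator acts on the moments as a shift, theta M = Lam M (it multiplies the k-th
   term of each moment series by k), and the moment matrix also satisfies Lam M = M (Lam^T)^2.
   Applying theta to the Gauss-Borel factorization, in which S M is upper triangular with
   diagonal H, and using that the leading principal minors of M do not vanish, one gets on and
   below the diagonal the identity  theta S + S Lam = Lam S + (theta H) H^{-1} S,  i.e. on the
   d-th subdiagonal  theta S^[d] + a_+ S^[d+1] = S^[d+1] + a_-^d((theta H) H^{-1}) S^[d].
   Comparing with the entries (n, n), (n+1, n), (n+2, n) of  S Lam = J S  gives alpha, beta and
   gamma, and the entry (n+2, n) of  S Lam M = J S M  gives gamma_n H_n = H_{n+2}.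
   Differentiability of the moments comes from termwise differentiation of power series, that
   of S from Cramer's rule. *)

From Stdlib Require Import Reals Lra.
From Coquelicot Require Import Coquelicot.
From mathcomp Require Import ssreflect ssrfun ssrbool eqtype ssrnat seq fintype bigop ssralg.
From mathcomp Require Import matrix Rstruct zify.

Set Implicit Arguments.
Unset Strict Implicit.
Unset Printing Implicit Defensive.
Open Scope R_scope.

Lemma eqbE (m n : nat) : Nat.eqb m n = (m == n).
Proof. by case: PeanoNat.Nat.eqb_spec => [->|/eqP/negbTE ->]; rewrite ?eqxx. Qed.

Lemma lower_unitri_diag (A : smat) i : lower_unitri A -> A i i = 1.
Proof. by case. Qed.

Lemma lower_unitri_upper (A : smat) i j : lower_unitri A -> (i < j)%N -> A i j = 0.
Proof. by move=> [_ A0] /ltP; apply: A0. Qed.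

Section FiniteSums.
Local Open Scope ring_scope.

Lemma sum_f_R0_big (f : nat -> R) n : sum_f_R0 f n = \sum_(0 <= k < n.+1) f k.
Proof.
elim: n => [|n IH]; first by rewrite big_nat1.
by rewrite big_nat_recr //= IH.
Qed.

Lemma sum_f_R0_swap (f : nat -> nat -> R) n m :
  sum_f_R0 (fun k => sum_f_R0 (f k) m) n = sum_f_R0 (fun l => sum_f_R0 (f^~ l) n) m.
Proof.
rewrite sum_f_R0_big; under eq_bigr do rewrite sum_f_R0_big.
rewrite sum_f_R0_big; under [RHS]eq_bigr do rewrite sum_f_R0_big.
exact: exchange_big.
Qed.

End FiniteSums.

Lemma sum_f_R0_delta (F : nat -> R) r d n :
  sum_f_R0 (fun k => if r == (k + d)%N then F k else 0) n =
  if (d <= r <= n + d)%N then F (r - d)%N else 0.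
Proof.
rewrite sum_f_R0_big -big_mkcond.
have [le_dr|lt_rd] := leqP d r; last first.
  by rewrite big_pred0 // => k; apply/eqP; lia.
rewrite (eq_bigl (pred1 (r - d)%N)) => [|k]; last by apply/eqP/eqP; lia.
by rewrite big_nat1_eq /=; congr (if _ then _ else _); lia.
Qed.

Lemma sum_f_R0_mull (x : R) (f : nat -> R) n :
  sum_f_R0 (fun k => x * f k) n = x * sum_f_R0 f n.
Proof. by rewrite scal_sum; apply: PartSum.sum_eq => k _; rewrite Rmult_comm. Qed.

Definition lower_mul (A B : smat) : smat :=
  fun i j => sum_f_R0 (fun k => A i k * B k j) i.

Lemma lower_mulE (A B : smat) i j n : lower_unitri A -> (i <= n)%N ->
  sum_f_R0 (fun k => A i k * B k j) n = lower_mul A B i j.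
Proof.
move=> LA; elim: n => [|n IH]; first by rewrite leqn0 => /eqP ->.
rewrite leq_eqVlt ltnS => /predU1P [-> // | le_in] /=.
by rewrite IH // (lower_unitri_upper LA) ?ltnS // Rmult_0_l Rplus_0_r.
Qed.

Lemma sum_mul_Lam (A : smat) i j : (j <= i.+1)%N ->
  sum_f_R0 (fun k => A i k * Lam k j) i = ap (A i) j.
Proof.
move=> le_ji; rewrite (PartSum.sum_eq _ (fun k => if j == (k + 1)%N then A i k else 0)).
  by rewrite sum_f_R0_delta addn1 subn1 le_ji andbT; case: j le_ji.
by move=> k _; rewrite /Lam eqbE addn1; case: ifP; lra.
Qed.

Lemma sum_f_R0_ap (f g : nat -> R) n :
  sum_f_R0 (fun k => ap f k * g k) n.+1 = sum_f_R0 (fun k => f k * g k.+1) n.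
Proof. by elim: n => [|n IH] /=; [ring | rewrite -IH]. Qed.

Lemma sum_jacobi4_mul (ga be al : sdiag) (A : smat) r j :
  sum_f_R0 (fun k => jacobi4 ga be al r k * A k j) r.+1 =
  (if r is r'.+2 then ga r' * A r' j else 0) + (if r is r'.+1 then be r' * A r' j else 0)
  + al r * A r j + A r.+1 j.
Proof.
rewrite (PartSum.sum_eq _ (fun k => (if r == (k + 2)%N then ga k * A k j else 0)
    + (if r == (k + 1)%N then be k * A k j else 0) + (if r == (k + 0)%N then al k * A k j else 0)
    + (if r.+1 == (k + 0)%N then A k j else 0))); last first.
  move=> k _; rewrite /jacobi4 /Lam !eqbE addn0 [(k == _)]eq_sym.
  by do 4 case: ifP => _; ring.
rewrite !plus_sum !sum_f_R0_delta !subn0 !addn0 !leqnn !andbT.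
case: r => [|[|r]] /=; rewrite ?subn1 ?Rplus_0_l //.
by rewrite !ifT ?subn2 //; lia.
Qed.

Definition lead_block (A : smat) n : 'M[R]_n := (\matrix_(i < n, j < n) A i j)%R.

Lemma lead_minor_row_inj (M : smat) r (u v : nat -> R) :
  lead_minor M r.+1 <> 0 ->
  (forall j, (j <= r)%N ->
     sum_f_R0 (fun k => u k * M k j) r = sum_f_R0 (fun k => v k * M k j) r) ->
  forall k, (k <= r)%N -> u k = v k.
Proof.
move=> Mr uMvM k le_kr.
have unitA : lead_block M r.+1 \in unitmx by rewrite unitmxE GRing.unitfE; apply/eqP.
pose row_of (w : nat -> R) := (\row_(a < r.+1) w a)%R.
have rowM w (j : 'I_r.+1) :
    (row_of w *m lead_block M r.+1)%R ord0 j = sum_f_R0 (fun k => w k * M k j) r.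
  by rewrite sum_f_R0_big big_mkord !mxE; apply: eq_bigr => a _; rewrite !mxE.
have : (row_of u *m lead_block M r.+1 = row_of v *m lead_block M r.+1)%R.
  by apply/matrixP => i j; rewrite !ord1 !rowM uMvM // -ltnS.
move=> /(congr1 (mulmx^~ (invmx (lead_block M r.+1)))); rewrite !mulmxK //.
by move=> /matrixP /(_ ord0 (inord k)); rewrite !mxE inordK.
Qed.

Section GaussBorel.
Variables (M Sm St : smat) (H : sdiag).
Hypothesis GB : gauss_borel M Sm St H.

Lemma lower_mul_gauss_borel i j : (j <= i)%N -> lower_mul Sm M i j = if i == j then H i else 0.
Proof.
have [_ [LSt GBij]] := GB.
have UStH j' : sum_f_R0 (fun l => lower_mul Sm M i l * St j' l) j' = if i == j' then H i else 0.
  rewrite -eqbE -GBij sum_f_R0_swap; apply: PartSum.sum_eq => l _.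
  by rewrite /lower_mul -scal_sum Rmult_comm.
elim/ltn_ind: j => j IH le_ji; move: (UStH j).
case: j IH le_ji => [|j] IH le_ji /=; rewrite lower_unitri_diag // Rmult_1_r //.
rewrite sum_eq_R0 ?Rplus_0_l // => l /leP le_lj.
by rewrite IH ?ifF ?Rmult_0_l //; lia.
Qed.

Lemma gauss_borel_H_neq0 r : lead_minor M r.+1 <> 0 -> H r <> 0.
Proof.
move=> Mr H0; have LSm := proj1 GB.
suff : Sm r r = 0 by rewrite lower_unitri_diag //; lra.
apply: (lead_minor_row_inj Mr (v := fun _ => 0)) => // j le_jr.
rewrite (lower_mulE _ _ LSm) // lower_mul_gauss_borel // sum_eq_R0 => [|k _]; last by ring.
by case: ifP.
Qed.

Lemma gauss_borel_S_cramer i k (lt_ki : (k < i)%N) : lead_minor M i <> 0 ->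
  Sm i k = ((\row_(c < i) - M i c) *m \adj (lead_block M i))%R ord0 (Ordinal lt_ki)
           / lead_minor M i.
Proof.
move=> Mi; have LSm := proj1 GB.
case: i lt_ki Mi => [//|i] lt_ki Mi.
have sA : ((\row_(a < i.+1) Sm i.+1 a) *m lead_block M i.+1 = \row_(c < i.+1) - M i.+1 c)%R.
  apply/matrixP => x c; rewrite !mxE.
  have := lower_mul_gauss_borel (ltnW (ltn_ord c)); rewrite ifF ?gtn_eqF //.
  rewrite /lower_mul /= lower_unitri_diag // Rmult_1_l sum_f_R0_big big_mkord.
  move=> /eqP; rewrite GRing.addr_eq0 => /eqP <-.
  by apply: eq_bigr => a _; rewrite !mxE.
have := congr1 (mulmx^~ (\adj (lead_block M i.+1))%R) sA.
rewrite -mulmxA mul_mx_adj mul_mx_scalar => /matrixP /(_ ord0 (Ordinal lt_ki)).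
rewrite !mxE => <-.
change (Sm i.+1 k = lead_minor M i.+1 * Sm i.+1 k / lead_minor M i.+1).
by field.
Qed.
End GaussBorel.

Lemma subdiagE d (A : smat) i : subdiag d A i = A (i + d)%N i.
Proof. by []. Qed.

Lemma ap_subdiag d (A : smat) r : ap (subdiag d.+1 A) r = ap (A (r + d)%N) r.
Proof. by case: r => //= r; rewrite subdiagE addSnnS. Qed.

Section StepLine.
Variables (Sm : smat) (ga be al : sdiag).
Hypotheses (LSm : lower_unitri Sm) (SL : step_line Sm ga be al).

Lemma step_line_entry r j : (j <= r.+1)%N ->
  ap (Sm r) j =
  (if r is r'.+2 then ga r' * Sm r' j else 0) + (if r is r'.+1 then be r' * Sm r' j else 0)
  + al r * Sm r j + Sm r.+1 j.
Proof. by move=> le_jr; rewrite -sum_mul_Lam // SL sum_jacobi4_mul. Qed.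

Lemma step_line_subdiag1 r : ap (subdiag 1 Sm) r = al r + subdiag 1 Sm r.
Proof.
rewrite ap_subdiag addn0 step_line_entry // lower_unitri_diag // subdiagE addn1.
case: r => [|[|r]] /=; first ring.
- by rewrite [Sm 0%N 1%N](lower_unitri_upper LSm) //; ring.
- by rewrite [Sm r _](lower_unitri_upper LSm) // [Sm r.+1 _](lower_unitri_upper LSm) //; ring.
Qed.

Lemma step_line_subdiag2 r :
  ap (subdiag 2 Sm) r = be r + al r.+1 * subdiag 1 Sm r + subdiag 2 Sm r.
Proof.
rewrite ap_subdiag addn1 step_line_entry /=; last lia.
rewrite lower_unitri_diag // !subdiagE addn1 addn2.
by case: r => [|r] /=; [ring | rewrite [Sm r _](lower_unitri_upper LSm) //; ring].
Qed.

Lemma step_line_subdiag3 r :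
  ap (subdiag 3 Sm) r =
  ga r + be r.+1 * subdiag 1 Sm r + al r.+2 * subdiag 2 Sm r + subdiag 3 Sm r.
Proof.
rewrite ap_subdiag addn2 step_line_entry /=; last lia.
by rewrite lower_unitri_diag // !subdiagE addn1 addn2 addn3; ring.
Qed.

(* Compare the entries (r+2, r) of  S Lam M = J S M : by the shift hypothesis
   S Lam M = S M (Lam^T)^2, whose entry is H_{r+2}. *)
Lemma step_line_gamma_H (M St : smat) (H : sdiag) r :
  gauss_borel M Sm St H -> (forall k j, M k.+1 j = M k j.+2) -> ga r * H r = H r.+2.
Proof.
move=> GB Mshift.
have := PartSum.sum_eq _ _ r.+3 (fun k _ => congr1 (Rmult^~ (M k r)) (SL r.+2 k)).
under PartSum.sum_eq => k /leP le_k do rewrite sum_mul_Lam //.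
under [RHS]PartSum.sum_eq => k _ do rewrite sum_jacobi4_mul /= !Rmult_plus_distr_r !Rmult_assoc.
rewrite sum_f_R0_ap; under PartSum.sum_eq => k _ do rewrite Mshift.
rewrite !plus_sum !sum_f_R0_mull !(lower_mulE _ _ LSm); try lia.
rewrite !(lower_mul_gauss_borel GB) ?eqxx; try lia.
by rewrite !ifF; try lia; move=> ->; ring.
Qed.
End StepLine.

Section MatrixDerivative.
Variable t : R.

Lemma ex_derive_big (op : R -> R -> R) (idx : R) (I : Type) (r : seq I) (P : pred I)
    (G : I -> R -> R) :
  (forall f g, ex_derive f t -> ex_derive g t -> ex_derive (fun s => op (f s) (g s)) t) ->
  (forall i, ex_derive (G i) t) ->
  ex_derive (fun s => \big[op/idx]_(i <- r | P i) G i s) t.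
Proof.
move=> dop dG; elim: r => [|a r IH].
  by apply: (ex_derive_ext (fun=> idx)) => [s|]; rewrite ?big_nil //; apply: ex_derive_const.
apply: (ex_derive_ext (fun s => if P a then op (G a s) (\big[op/idx]_(i <- r | P i) G i s)
                                else \big[op/idx]_(i <- r | P i) G i s)).
  by move=> s; rewrite big_cons.
by case: (P a) => //; apply: dop.
Qed.

Lemma ex_derive_det n (A : R -> 'M[R]_n) :
  (forall i j, ex_derive (fun s => A s i j) t) -> ex_derive (fun s => (\det (A s))%R) t.
Proof.
move=> dA; rewrite /determinant; apply: ex_derive_big => [f g|p]; first exact: ex_derive_plus.
apply: ex_derive_mult; first exact: ex_derive_const.
by apply: ex_derive_big => [f g|i]; [exact: ex_derive_mult | exact: dA].
Qed.

Lemma ex_derive_adj n (A : R -> 'M[R]_n) :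
  (forall i j, ex_derive (fun s => A s i j) t) ->
  forall i j, ex_derive (fun s => (\adj (A s))%R i j) t.
Proof.
move=> dA i j; apply: (ex_derive_ext (fun s => cofactor (A s) j i)) => [s|]; first by rewrite mxE.
apply: ex_derive_mult; first exact: ex_derive_const.
apply: ex_derive_det => a b.
by apply: (ex_derive_ext (fun s => A s (lift j a) (lift i b))) => // s; rewrite !mxE.
Qed.

Lemma ex_derive_mulmx m n p (A : R -> 'M[R]_(m, n)) (B : R -> 'M[R]_(n, p)) :
  (forall i j, ex_derive (fun s => A s i j) t) -> (forall i j, ex_derive (fun s => B s i j) t) ->
  forall i k, ex_derive (fun s => (A s *m B s)%R i k) t.
Proof.
move=> dA dB i k; apply: (ex_derive_ext (fun s => (\sum_j A s i j * B s j k)%R)) => [s|].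
  by rewrite mxE.
by apply: ex_derive_big => [f g|j]; [exact: ex_derive_plus | exact: ex_derive_mult].
Qed.

End MatrixDerivative.

Lemma ex_derive_gauss_borel_S (Mt Smt Stt : R -> smat) (Ht : R -> sdiag) t :
  locally t (fun s => gauss_borel (Mt s) (Smt s) (Stt s) (Ht s) /\
                      forall n, lead_minor (Mt s) n.+1 <> 0) ->
  (forall k j, ex_derive (fun s => Mt s k j) t) ->
  forall i k, ex_derive (fun s => Smt s i k) t.
Proof.
move=> near_GB dM i k; have [lt_ki|lt_ik|->] := ltngtP k i; last first.
- apply: (ex_derive_ext_loc (fun=> 1)); last exact: ex_derive_const.
  by apply: filter_imp near_GB => s [[LS _] _]; rewrite lower_unitri_diag.
- apply: (ex_derive_ext_loc (fun=> 0)); last exact: ex_derive_const.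
  by apply: filter_imp near_GB => s [[LS _] _]; rewrite (lower_unitri_upper LS).
case: i lt_ki => [//|i] lt_ki.
pose b s := (\row_(c < i.+1) - Mt s i.+1 c)%R.
pose A s := lead_block (Mt s) i.+1.
apply: (ex_derive_ext_loc
          (fun s => (b s *m \adj (A s))%R ord0 (Ordinal lt_ki) / lead_minor (Mt s) i.+1)).
  by apply: filter_imp near_GB => s [GB Ms]; rewrite -(gauss_borel_S_cramer GB).
have dA a c : ex_derive (fun s => A s a c) t.
  by apply: (ex_derive_ext (fun s => Mt s a c)) => // s; rewrite mxE.
apply: ex_derive_div.
- apply: ex_derive_mulmx => [a c|]; last exact: ex_derive_adj.
  by apply: (ex_derive_ext (fun s => - Mt s i.+1 c)) => [s|]; [rewrite mxE | apply: ex_derive_opp].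
- exact: (ex_derive_det dA).
- exact: (proj2 (locally_singleton _ _ near_GB)).
Qed.

Lemma locally_fst (P : R * R -> Prop) x y : locally (x, y) P -> locally x (fun s => P (s, y)).
Proof. by move=> [eps HP]; exists eps => s bs; apply: HP; split => //; apply: ball_center. Qed.

Lemma locally_snd (P : R * R -> Prop) x y : locally (x, y) P -> locally y (fun s => P (x, s)).
Proof. by move=> [eps HP]; exists eps => s bs; apply: HP; split => //; apply: ball_center. Qed.

Definition ex_partials (f : R -> R -> R) e1 e2 :=
  ex_derive (fun x => f x e2) e1 /\ ex_derive (fun y => f e1 y) e2.

Definition thetaM (A : R -> R -> smat) e1 e2 : smat :=
  fun i k => theta (fun x y => A x y i k) e1 e2.

Section EulerOperator.
Variables e1 e2 : R.
Implicit Types f g : R -> R -> R.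

Lemma ex_partials_plus f g : ex_partials f e1 e2 -> ex_partials g e1 e2 ->
  ex_partials (fun x y => f x y + g x y) e1 e2.
Proof. by move=> [? ?] [? ?]; split; apply: ex_derive_plus. Qed.

Lemma ex_partials_mult f g : ex_partials f e1 e2 -> ex_partials g e1 e2 ->
  ex_partials (fun x y => f x y * g x y) e1 e2.
Proof. by move=> [? ?] [? ?]; split; apply: ex_derive_mult. Qed.

Lemma theta_const c : theta (fun _ _ => c) e1 e2 = 0.
Proof. by rewrite /theta !Derive_const; ring. Qed.

Lemma theta_plus f g : ex_partials f e1 e2 -> ex_partials g e1 e2 ->
  theta (fun x y => f x y + g x y) e1 e2 = theta f e1 e2 + theta g e1 e2.
Proof.
move=> [? ?] [? ?]; rewrite /theta (Derive_plus (fun x => f x e2) (fun x => g x e2)) //.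
rewrite (Derive_plus (fun y => f e1 y) (fun y => g e1 y)) //.
set fx := Derive _ e1; set gx := Derive _ e1; set fy := Derive _ e2; set gy := Derive _ e2.
ring.
Qed.

Lemma theta_mult f g : ex_partials f e1 e2 -> ex_partials g e1 e2 ->
  theta (fun x y => f x y * g x y) e1 e2 = theta f e1 e2 * g e1 e2 + f e1 e2 * theta g e1 e2.
Proof.
move=> [? ?] [? ?]; rewrite /theta (Derive_mult (fun x => f x e2) (fun x => g x e2)) //.
rewrite (Derive_mult (fun y => f e1 y) (fun y => g e1 y)) //.
set fx := Derive _ e1; set gx := Derive _ e1; set fy := Derive _ e2; set gy := Derive _ e2.
ring.
Qed.

Lemma ex_partials_sum (F : nat -> R -> R -> R) n : (forall k, ex_partials (F k) e1 e2) ->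
  ex_partials (fun x y => sum_f_R0 (fun k => F k x y) n) e1 e2.
Proof. by move=> dF; elim: n => [|n IH] /=; last apply: ex_partials_plus. Qed.

Lemma theta_sum (F : nat -> R -> R -> R) n : (forall k, ex_partials (F k) e1 e2) ->
  theta (fun x y => sum_f_R0 (fun k => F k x y) n) e1 e2 =
  sum_f_R0 (fun k => theta (F k) e1 e2) n.
Proof.
move=> dF; elim: n => [|n IH] //=.
by rewrite (theta_plus (ex_partials_sum n dF) (dF n.+1)) IH.
Qed.

Lemma theta_ext_loc f g : locally (e1, e2) (fun p => f p.1 p.2 = g p.1 p.2) ->
  theta f e1 e2 = theta g e1 e2.
Proof.
move=> fg; rewrite /theta (Derive_ext_loc _ _ _ (locally_fst fg)).
by rewrite (Derive_ext_loc _ _ _ (locally_snd fg)).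
Qed.

Lemma theta_lower_mul (A B : R -> R -> smat) i j :
  (forall k, ex_partials (fun x y => A x y i k) e1 e2) ->
  (forall k, ex_partials (fun x y => B x y k j) e1 e2) ->
  theta (fun x y => lower_mul (A x y) (B x y) i j) e1 e2 =
  lower_mul (thetaM A e1 e2) (B e1 e2) i j + lower_mul (A e1 e2) (thetaM B e1 e2) i j.
Proof.
move=> dA dB; rewrite /lower_mul (theta_sum (F := fun k x y => A x y i k * B x y k j)).
  by rewrite -plus_sum; apply: PartSum.sum_eq => k _; apply: theta_mult.
by move=> k; apply: ex_partials_mult.
Qed.

End EulerOperator.

Lemma CV_radius_ge_ex_pseries (a : nat -> R) x :
  ex_pseries a x -> Rbar_le (Rabs x) (CV_radius a).
Proof.
move=> /ex_series_lim_0 a0; have [M HM] := filterlim_bounded _ (ex_intro _ 0 a0).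
apply: (proj1 (CV_radius_bounded a)); exists M => n.
rewrite RPow_abs Rabs_mult Rabs_Rabsolu -Rabs_mult Rmult_comm -pow_n_pow; exact: HM.
Qed.

Lemma euler_derive_PSeries (a : nat -> R) e :
  locally e (ex_pseries a) ->
  ex_derive (PSeries a) e /\ e * Derive (PSeries a) e = PSeries (fun n => INR n * a n) e.
Proof.
move=> [eps Ha].
have lt_e_CV : Rbar_lt (Rabs e) (CV_radius a).
  pose x := if Rle_dec 0 e then e + eps / 2 else e - eps / 2.
  have eps0 := cond_pos eps.
  have [bx lt_ex] : ball e eps x /\ Rabs e < Rabs x.
    rewrite /ball /= /AbsRing_ball /abs /minus /plus /opp /= /x.
    by case: Rle_dec => h /=; split; split_Rabs; lra.
  exact: (Rbar_lt_le_trans (Rabs e) (Rabs x) _ lt_ex (CV_radius_ge_ex_pseries (Ha x bx))).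
split; first exact: ex_derive_PSeries.
rewrite Derive_PSeries // -PSeries_incr_1; apply: PSeries_ext => -[|n] //=.
by rewrite Rmult_0_l.
Qed.

Definition hcoef (bs cs : list R) (k : nat) : R :=
  List.fold_right Rmult 1 (List.map (fun b => poch b k) bs)
  / List.fold_right Rmult 1 (List.map (fun c => poch c k) cs)
  / INR (Stdlib.Arith.Factorial.fact k).

Lemma hweightE bs cs eta k : hweight bs cs eta k = hcoef bs cs k * eta ^ k.
Proof. by rewrite /hweight /hcoef /Rdiv; ring. Qed.

Lemma scal_pow_n (x c : R) k : scal (pow_n x k) c = c * x ^ k.
Proof. by rewrite pow_n_pow Rmult_comm. Qed.

Lemma euler_derive_moment_series bs cs e p :
  locally e (fun x => forall q, ex_series (fun k => INR k ^ q * hweight bs cs x k)) ->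
  ex_derive (fun x => Series (fun k => INR k ^ p * hweight bs cs x k)) e /\
  e * Derive (fun x => Series (fun k => INR k ^ p * hweight bs cs x k)) e =
  Series (fun k => INR k ^ p.+1 * hweight bs cs e k).
Proof.
move=> near_conv; pose a k := INR k ^ p * hcoef bs cs k.
have toPS x : Series (fun k => INR k ^ p * hweight bs cs x k) = PSeries a x.
  by apply: Series_ext => k /=; rewrite hweightE /a; ring.
have [da Da] :
    ex_derive (PSeries a) e /\ e * Derive (PSeries a) e = PSeries (fun k => INR k * a k) e.
  apply: euler_derive_PSeries; apply: filter_imp near_conv => x conv.
  by apply: (ex_series_ext _ _ _ (conv p)) => k; rewrite hweightE scal_pow_n /a Rmult_assoc.
split; first exact: ex_derive_ext da.
rewrite (Derive_ext _ _ _ toPS) Da; apply: Series_ext => k /=.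
by rewrite hweightE /a; ring.
Qed.

Lemma moment_shift (w1 w2 : nat -> R) k j : moment w1 w2 k.+1 j = moment w1 w2 k j.+2.
Proof. by rewrite /moment /= -plus_n_Sm. Qed.

Lemma theta_moment bs1 bs2 cs e1 e2 :
  locally (e1, e2) (fun p => forall q,
     ex_series (fun k => INR k ^ q * hweight bs1 cs p.1 k) /\
     ex_series (fun k => INR k ^ q * hweight bs2 cs p.2 k)) ->
  forall n j,
  ex_partials (fun x y => moment (hweight bs1 cs x) (hweight bs2 cs y) n j) e1 e2 /\
  theta (fun x y => moment (hweight bs1 cs x) (hweight bs2 cs y) n j) e1 e2 =
  moment (hweight bs1 cs e1) (hweight bs2 cs e2) n.+1 j.
Proof.
move=> near_conv n j; rewrite /ex_partials /theta /moment; case: (Nat.even j).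
- have [d1 D1] := euler_derive_moment_series (n + Nat.div2 j)
                     (filter_imp _ _ (fun x c q => proj1 (c q)) (locally_fst near_conv)).
  by rewrite Derive_const -D1 Rmult_0_r Rplus_0_r; do 2 split => //; apply: ex_derive_const.
- have [d2 D2] := euler_derive_moment_series (n + Nat.div2 j)
                     (filter_imp _ _ (fun y c q => proj2 (c q)) (locally_snd near_conv)).
  by rewrite Derive_const -D2 Rmult_0_r Rplus_0_l; do 2 split => //; apply: ex_derive_const.
Qed.

Section EulerGaussBorel.
Variables (Mom Sm St : R -> R -> smat) (H : R -> R -> sdiag) (e1 e2 : R).
Hypothesis near_GB : locally (e1, e2) (fun p =>
  gauss_borel (Mom p.1 p.2) (Sm p.1 p.2) (St p.1 p.2) (H p.1 p.2) /\
  forall n, lead_minor (Mom p.1 p.2) n.+1 <> 0).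
Hypothesis dMom : forall k j, ex_partials (fun x y => Mom x y k j) e1 e2.
Hypothesis thetaMom : forall k j, theta (fun x y => Mom x y k j) e1 e2 = Mom e1 e2 k.+1 j.

Let GB : gauss_borel (Mom e1 e2) (Sm e1 e2) (St e1 e2) (H e1 e2) :=
  proj1 (locally_singleton _ _ near_GB).
Let LS : lower_unitri (Sm e1 e2) := proj1 GB.
Let minor : forall n, lead_minor (Mom e1 e2) n.+1 <> 0 :=
  proj2 (locally_singleton _ _ near_GB).

Lemma ex_partials_S i k : ex_partials (fun x y => Sm x y i k) e1 e2.
Proof.
split.
- apply: (ex_derive_gauss_borel_S (Mt := fun x => Mom x e2) (Stt := fun x => St x e2)
            (Ht := fun x => H x e2) (locally_fst near_GB)) => k' j.
  exact: (proj1 (dMom k' j)).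
- apply: (ex_derive_gauss_borel_S (Mt := fun y => Mom e1 y) (Stt := fun y => St e1 y)
            (Ht := fun y => H e1 y) (locally_snd near_GB)) => k' j.
  exact: (proj2 (dMom k' j)).
Qed.

Lemma theta_S_entry r k : (k <= r)%N ->
  thetaM Sm e1 e2 r k + ap (Sm e1 e2 r) k =
  Sm e1 e2 r.+1 k + thetaD H e1 e2 r / H e1 e2 r * Sm e1 e2 r k.
Proof.
set T := thetaD H e1 e2 r / H e1 e2 r.
have Hr := gauss_borel_H_neq0 GB (@minor r).
have TH : T * H e1 e2 r = thetaD H e1 e2 r by rewrite /T; field.
(* Multiplied by the first r+1 columns of M, both rows give [r == j] theta H_r - M_{r+1,j}. *)
apply: (lead_minor_row_inj (u := fun k => thetaM Sm e1 e2 r k + ap (Sm e1 e2 r) k)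
          (v := fun k => Sm e1 e2 r.+1 k + T * Sm e1 e2 r k) (@minor r)) => j le_jr.
have thetaSM : theta (fun x y => lower_mul (Sm x y) (Mom x y) r j) e1 e2 =
               if r == j then thetaD H e1 e2 r else 0.
  rewrite (theta_ext_loc (g := fun x y => if r == j then H x y r else 0)).
    by case: eqP => _ //; apply: theta_const.
  by apply: filter_imp near_GB => p [GBp _]; rewrite (lower_mul_gauss_borel GBp).
have leibniz : (if r == j then thetaD H e1 e2 r else 0) =
               sum_f_R0 (fun l => thetaM Sm e1 e2 r l * Mom e1 e2 l j) r +
               sum_f_R0 (fun l => Sm e1 e2 r l * Mom e1 e2 l.+1 j) r.
  rewrite -thetaSM (theta_lower_mul (ex_partials_S r) (fun l => dMom l j)); congr (_ + _).
  by apply: PartSum.sum_eq => l _; rewrite /thetaM thetaMom.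
have shift : sum_f_R0 (fun l => ap (Sm e1 e2 r) l * Mom e1 e2 l j) r =
             sum_f_R0 (fun l => Sm e1 e2 r l * Mom e1 e2 l.+1 j) r - Mom e1 e2 r.+1 j.
  by rewrite -(sum_f_R0_ap (Sm e1 e2 r) (fun l => Mom e1 e2 l j)) /= lower_unitri_diag //; ring.
have row_succ : sum_f_R0 (fun l => Sm e1 e2 r.+1 l * Mom e1 e2 l j) r = - Mom e1 e2 r.+1 j.
  have := lower_mul_gauss_borel GB (leqW le_jr); rewrite ifF; last by apply/eqP; lia.
  by rewrite /lower_mul /= lower_unitri_diag // => row0; lra.
have row := lower_mul_gauss_borel GB le_jr; rewrite /lower_mul in row.
under PartSum.sum_eq => l _ do rewrite Rmult_plus_distr_r.
under [in RHS]PartSum.sum_eq => l _ do rewrite Rmult_plus_distr_r Rmult_assoc.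
rewrite !plus_sum sum_f_R0_mull shift row_succ row.
by move: leibniz TH; case: eqP => _; lra.
Qed.

Lemma theta_subdiag_S d k :
  thetaD (fun x y => subdiag d (Sm x y)) e1 e2 k + ap (subdiag d.+1 (Sm e1 e2)) k =
  subdiag d.+1 (Sm e1 e2) k
  + thetaD H e1 e2 (k + d)%N / H e1 e2 (k + d)%N * subdiag d (Sm e1 e2) k.
Proof. by rewrite ap_subdiag !subdiagE addnS; apply: theta_S_entry; rewrite leq_addr. Qed.

Lemma theta_diag_S k :
  ap (subdiag 1 (Sm e1 e2)) k = subdiag 1 (Sm e1 e2) k + thetaD H e1 e2 k / H e1 e2 k.
Proof.
have := theta_S_entry (leqnn k).
have -> : thetaM Sm e1 e2 k k = 0.
  rewrite /thetaM (theta_ext_loc (g := fun _ _ => 1)) ?theta_const //.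
  by apply: filter_imp near_GB => p [[LSp _] _]; rewrite lower_unitri_diag.
by rewrite ap_subdiag subdiagE !addn0 addn1 lower_unitri_diag // => E; lra.
Qed.

Variables al be ga : sdiag.
Hypothesis SL : step_line (Sm e1 e2) ga be al.

Lemma step_line_alpha r : al r = thetaD H e1 e2 r / H e1 e2 r.
Proof. by have := theta_diag_S r; rewrite (step_line_subdiag1 LS SL); lra. Qed.

Lemma step_line_beta r : be r = - thetaD (fun x y => subdiag 1 (Sm x y)) e1 e2 r.
Proof.
have := theta_subdiag_S 1 r; rewrite (step_line_subdiag2 LS SL) step_line_alpha addn1; lra.
Qed.

Lemma step_line_gamma r :
  ga r = - thetaD (fun x y => subdiag 2 (Sm x y)) e1 e2 r
         + thetaD (fun x y => subdiag 1 (Sm x y)) e1 e2 r.+1 * subdiag 1 (Sm e1 e2) r.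
Proof.
have := theta_subdiag_S 2 r.
by rewrite (step_line_subdiag3 LS SL) step_line_beta step_line_alpha addn2; lra.
Qed.
End EulerGaussBorel.

Theorem mainTheorem17
  (bs1 bs2 cs : list R)
  (* the Pochhammer symbols (c_j)_k never vanish *)
  (Hc : forall c, List.In c cs -> forall n : nat, c <> - INR n)
  (* U : an open set of parameters (eta1, eta2) *)
  (U : R -> R -> Prop)
  (HUopen : forall e1 e2, U e1 e2 ->
     exists eps, 0 < eps /\
       forall x y, Rabs (x - e1) < eps -> Rabs (y - e2) < eps -> U x y)
  (* the moment series converge on U *)
  (Hconv : forall e1 e2, U e1 e2 -> forall p : nat,
     ex_series (fun k => INR k ^ p * hweight bs1 cs e1 k) /\
     ex_series (fun k => INR k ^ p * hweight bs2 cs e2 k))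
  (* all leading principal minors of the moment matrix are nonzero on U *)
  (Hminor : forall e1 e2, U e1 e2 -> forall n : nat,
     lead_minor (moment (hweight bs1 cs e1) (hweight bs2 cs e2)) (S n) <> 0)
  (* Gauss-Borel factorization M = S^{-1} H St^{-T} *)
  (Sm St : R -> R -> smat) (H : R -> R -> sdiag)
  (Hfact : forall e1 e2, U e1 e2 ->
     gauss_borel (moment (hweight bs1 cs e1) (hweight bs2 cs e2))
                 (Sm e1 e2) (St e1 e2) (H e1 e2))
  (* S Lam S^{-1} = (Lam^T)^2 gamma + Lam^T beta + alpha + Lam *)
  (al be ga : R -> R -> sdiag)
  (Hstep : forall e1 e2, U e1 e2 ->
     step_line (Sm e1 e2) (ga e1 e2) (be e1 e2) (al e1 e2)) :
  forall e1 e2, U e1 e2 ->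
  let S1 := fun x y => subdiag 1 (Sm x y) in
  let S2 := fun x y => subdiag 2 (Sm x y) in
  let tHH := fun i => thetaD H e1 e2 i / H e1 e2 i in
  forall i : nat,
    (* alpha = (theta H) H^{-1} = a_+ S^[1] - S^[1] *)
    al e1 e2 i = tHH i /\
    tHH i = ap (S1 e1 e2) i - S1 e1 e2 i /\
    (* beta = - theta S^[1] = a_+ S^[2] - S^[2] - S^[1] a_-((theta H) H^{-1}) *)
    be e1 e2 i = - thetaD S1 e1 e2 i /\
    - thetaD S1 e1 e2 i = ap (S2 e1 e2) i - S2 e1 e2 i - S1 e1 e2 i * am tHH i /\
    (* gamma = - theta S^[2] + (theta a_- S^[1]) S^[1] = H^{-1} a_-^2 H *)
    ga e1 e2 i = - thetaD S2 e1 e2 i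
                 + thetaD (fun x y => am (S1 x y)) e1 e2 i * S1 e1 e2 i /\
    - thetaD S2 e1 e2 i + thetaD (fun x y => am (S1 x y)) e1 e2 i * S1 e1 e2 i
      = / H e1 e2 i * am (am (H e1 e2)) i.
Proof.
move=> e1 e2 hU S1 S2 tHH i.
pose Mom x y := moment (hweight bs1 cs x) (hweight bs2 cs y).
have nearU : locally (e1, e2) (fun p => U p.1 p.2).
  have [eps [eps0 HU]] := HUopen e1 e2 hU.
  by exists (mkposreal eps eps0) => -[x y] [bx b_y]; apply: HU.
have near_GB : locally (e1, e2) (fun p =>
    gauss_borel (Mom p.1 p.2) (Sm p.1 p.2) (St p.1 p.2) (H p.1 p.2) /\
    forall n, lead_minor (Mom p.1 p.2) n.+1 <> 0).
  by apply: filter_imp nearU => p Up; split; [apply: Hfact | apply: Hminor].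
have conv : locally (e1, e2) (fun p => forall q,
    ex_series (fun k => INR k ^ q * hweight bs1 cs p.1 k) /\
    ex_series (fun k => INR k ^ q * hweight bs2 cs p.2 k)).
  by apply: filter_imp nearU => p /Hconv.
have dM k j := proj1 (theta_moment conv k j).
have theta_Mom k j := proj2 (theta_moment conv k j).
have GB := Hfact e1 e2 hU; have SL := Hstep e1 e2 hU.
have gaH := step_line_gamma_H (proj1 GB) SL i GB (moment_shift _ _).
have Hi := gauss_borel_H_neq0 GB (Hminor e1 e2 hU i).
have -> : thetaD (fun x y => am (S1 x y)) e1 e2 i = thetaD S1 e1 e2 i.+1 by [].
have alpha := step_line_alpha near_GB dM theta_Mom SL.
have beta := step_line_beta near_GB dM theta_Mom SL.
have gamma := step_line_gamma near_GB dM theta_Mom SL i.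
have diag := theta_diag_S near_GB dM theta_Mom i.
have sub1 := theta_subdiag_S near_GB dM theta_Mom 1 i; rewrite addn1 in sub1.
rewrite /tHH /am /S1 /S2 alpha beta -gamma.
do 4 (split; first lra); split; first by [].
by rewrite -gaH; field.
Qed.
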